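(* For any $C<\infty$, $$\mathbf P\Big(I^{[-n,n]\times\{0\}}_1\nsubseteq[-n-\log n,\,n+\log n]\times[0,\log n]\Big)<\frac{1}{n^{C}}$$ for all sufficiently large $n$.
   Context: $\mathbb{H}=\{(x_1,x_2)\in\mathbb{Z}^2:x_2\ge0\}$. To each directed nearest-neighbour edge $x\to y$ in $\mathbb{H}$ attach an independent Poisson process $N^{x\to y}$ of intensity $\max(\sqrt{x_2},1)$. For $x\in\mathbb{H}$ and $t\ge0$, $I^x_t$ is the set of $y\in\mathbb{H}$ such that there are a nearest-neighbour path $x=y_0,y_1,\dots,y_m=y$ in $\mathbb{H}$ ($m\ge0$) and times $0<s_1<\dots<s_m\le t$ with $N^{y_{i-1}\to y_i}$ having an arrival at time $s_i$ for each $i$. For $V\subset\mathbb{H}$, $I^V_t=\bigcup_{x\in V}I^x_t$ (this is the interface process started from $V$, in which each occupied site $x$ tries to occupy each neighbour at rate $\max(\sqrt{x_2},1)$). *)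

From HB Require Import structures.
From mathcomp Require Import all_boot all_order all_algebra.
From mathcomp Require Import all_classical all_reals all_analysis.
Set Implicit Arguments. Unset Strict Implicit. Unset Printing Implicit Defensive.
Import Order.TTheory GRing.Theory Num.Theory.
Local Open Scope classical_set_scope.
Local Open Scope ring_scope.

Definition site := (int * int)%type.
Definition inH (x : site) : Prop := (0 <= x.2)%R.
Definition nn (x y : site) : Prop := (`|x.1 - y.1| + `|x.2 - y.2| = 1)%R.
Definition edgeH (x y : site) : Prop := inH x /\ inH y /\ nn x y.

Definition rate (R : realType) (x : site) : R := Num.max (Num.sqrt (x.2%:~R)) 1.

Definition poisson_pmf (R : realType) (mu : R) (k : nat) : R :=
  expR (- mu) * mu ^+ k / (k`!)%:R.

Definition npts (R : realType) (A : set R) (s t : R) (k : nat) : Prop :=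
  exists l : seq R, uniq l /\ size l = k /\
    (forall u, (u \in l) <-> (A u /\ s < u /\ u <= t)).

(* A x y w : set of arrival times of the process N^{x->y} at sample point w.
   The family (N^{x->y}) over the directed edges of H is a family of
   independent Poisson processes with intensities rate x: for any finitely many
   (edge, interval) pairs, with intervals on a common edge pairwise disjoint,
   the joint law of the counts is the product of Poisson laws. *)
Definition indep_poisson_family (R : realType) (d : measure_display)
    (T : measurableType d) (P : probability T R)
    (A : site -> site -> T -> set R) : Prop :=
  forall (m : nat) (x y : 'I_m -> site) (s t : 'I_m -> R) (c : 'I_m -> nat),
    (forall i, edgeH (x i) (y i) /\ 0 <= s i /\ s i <= t i) ->
    (forall i j, i != j -> x i = x j -> y i = y j -> t i <= s j \/ t j <= s i) ->
    measurable [set w | forall i, npts (A (x i) (y i) w) (s i) (t i) (c i)] /\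
    P [set w | forall i, npts (A (x i) (y i) w) (s i) (t i) (c i)] =
      (\prod_(i < m) poisson_pmf (rate R (x i) * (t i - s i)) (c i))%:E.

Inductive reach (R : realType) (T : Type) (A : site -> site -> T -> set R)
    (w : T) : site -> R -> site -> R -> Prop :=
  | reach_nil : forall x s t, reach A w x s x t
  | reach_step : forall x z y s u t,
      edgeH x z -> A x z w u -> s < u -> u <= t ->
      reach A w z u y t -> reach A w x s y t.

Definition I_proc (R : realType) (T : Type) (A : site -> site -> T -> set R)
    (w : T) (x : site) (t : R) : set site := [set y | reach A w x 0 y t].
Definition I_procV (R : realType) (T : Type) (A : site -> site -> T -> set R)
    (w : T) (V : set site) (t : R) : set site :=
  [set y | exists2 x, V x & I_proc A w x t y].

Definition segment0 (n : nat) : set site :=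
  [set x | (- (n%:Z) <= x.1 <= n%:Z)%R /\ x.2 = 0%R].
Definition box (R : realType) (n : nat) : set site :=
  [set y | - (n%:R) - ln (n%:R) <= (y.1%:~R : R) <= n%:R + ln (n%:R) /\
           0 <= (y.2%:~R : R) <= ln (n%:R)].

(* If the interface started from [-n, n] x {0} leaves the box by time 1, then, after
   loop erasure, some self-avoiding path of K = floor (log n) steps in H starting on
   the segment has its edges ringing at increasing times in ]0, 1].  Record the start,
   the K directions and, for each step, the slot ]j/K, (j+1)/K] of its ringing time:
   the slots are nondecreasing, so there are at most (2n+1) 4^K 4^K such skeletons.
   The K edges of a skeleton are distinct and lie at height at most K, so by
   independence they all ring in their slots with probability at most (sqrt K / K)^K.
   The union bound gives (2n+1) (16 / sqrt K)^K, which is eventually below n^-C. *)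

From Pilot Require Import Defs.
From HB Require Import structures.
From mathcomp Require Import all_boot all_order all_algebra.
From mathcomp Require Import all_classical all_reals all_analysis.
From mathcomp Require Import zify ring lra.
Set Implicit Arguments. Unset Strict Implicit. Unset Printing Implicit Defensive.
Import Order.TTheory GRing.Theory Num.Theory.
Local Open Scope classical_set_scope.
Local Open Scope ring_scope.

Definition site_add (x y : site) : site := (x.1 + y.1, x.2 + y.2).

Definition unit_step (k : 'I_4) : site :=
  match val k with 0 => (1, 0) | 1 => (-1, 0) | 2 => (0, 1) | _ => (0, -1) end.

Definition step_index (x y : site) : 'I_4 :=
  if y.1 == x.1 + 1 then inord 0 else if y.1 == x.1 - 1 then inord 1
  else if y.2 == x.2 + 1 then inord 2 else inord 3.

Lemma nn_step_index x y : nn x y -> y = site_add x (unit_step (step_index x y)).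
Proof.
case: x y => [x1 x2] [y1 y2]; rewrite /nn /step_index /site_add /unit_step /= => xy.
by case: eqVneq => [|?]; [|case: eqVneq => [|?]; [|case: eqVneq => [|?]]];
  rewrite inordK //= => *; congr pair; lia.
Qed.

Lemma nn_unit_step x k : nn x (site_add x (unit_step k)).
Proof. by rewrite /nn /site_add /unit_step; case: k => [[|[|[|[|k]]]] ?] /=; lia. Qed.

Lemma unit_step_height k : (unit_step k).2 <= 1.
Proof. by case: k => [[|[|[|[|k]]]] ?]. Qed.

Fixpoint walk (x : site) (dir : nat -> 'I_4) (i : nat) : site :=
  if i is i'.+1 then site_add (walk x dir i') (unit_step (dir i')) else x.

Lemma walk_height x dir i : (walk x dir i).2 <= x.2 + i%:Z.
Proof.
elim: i => [|i IH] /=; first by rewrite addr0.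
by have := unit_step_height (dir i); rewrite /site_add /=; lia.
Qed.

Section TimedPaths.
Variables (R : realType) (T : Type) (A : site -> site -> T -> set R) (w : T) (t : R).

Definition timed_step (p q : site * R) : Prop :=
  [/\ edgeH p.1 q.1, A p.1 q.1 w q.2, p.2 < q.2 & q.2 <= t].

Fixpoint timed_path (p : site * R) (l : seq (site * R)) : Prop :=
  if l is q :: l' then timed_step p q /\ timed_path q l' else True.

Lemma timed_path_cat p l1 l2 :
  timed_path p (l1 ++ l2) <-> timed_path p l1 /\ timed_path (last p l1) l2.
Proof.
elim: l1 p => [|q l1 IH] p /=; first by split=> // -[].
split=> [[pq /IH[ql1 ql2]] | [[pq ql1] ql2]] //.
by split=> //; apply/IH.
Qed.

Lemma timed_path_take p l i : timed_path p l -> timed_path p (take i l).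
Proof. by rewrite -{1}(cat_take_drop i l) => /timed_path_cat[]. Qed.

Lemma timed_path_time p l : timed_path p l -> p.2 <= (last p l).2.
Proof.
elim: l p => [|q l IH] p /=; first by rewrite lexx.
by case=> -[_ _ pq _] /IH; apply/le_trans/ltW.
Qed.

Lemma timed_path_earlier x s s' l : s' <= s ->
  timed_path (x, s) l -> timed_path (x, s') l.
Proof.
case: l => [|q l] //= s's [[? ? sq ?] ?]; split=> //; split=> //.
exact: le_lt_trans sq.
Qed.

Lemma timed_pathP p l : timed_path p l ->
  forall i, (i < size l)%N -> timed_step (nth p (p :: l) i) (nth p (p :: l) i.+1).
Proof.
elim: l p => [|q l IH] p //= [pq ql] [|i] //=; rewrite ltnS => il.
have il' : (i < size (q :: l))%N by exact: ltnW.
by rewrite (set_nth_default q p il) (set_nth_default q p il'); apply: IH.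
Qed.

Lemma timed_path_time_homo p l i i' : timed_path p l -> (i <= i' <= size l)%N ->
  (nth p (p :: l) i).2 <= (nth p (p :: l) i').2.
Proof.
move=> pl /andP[ii' i'l].
have homo : {in [pred j | (j <= size l)%N] &,
    {homo (fun j => (nth p (p :: l) j).2) : j j' / (j <= j')%N >-> j <= j'}}.
  apply: homo_leq_in lexx le_trans _ _ => [j j' _|j _]; rewrite !inE.
  - by move=> ? j'' ?; rewrite inE; lia.
  - by move=> jl; have [_ _ /ltW] := timed_pathP pl jl.
by apply: homo; rewrite ?inE //; apply: leq_trans i'l.
Qed.

Lemma timed_path_dist p l : timed_path p l ->
  `|(last p l).1.1 - p.1.1| + `|(last p l).1.2 - p.1.2| <= (size l)%:Z.
Proof.
elim: l p => [|q l IH] p /=; first by rewrite !subrr.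
by case=> -[[_ [_ ]]]; rewrite /nn => ? _ _ _ /IH; lia.
Qed.

Lemma timed_path_inH p l : timed_path p l -> inH p.1 -> inH (last p l).1.
Proof. by elim: l p => [|q l IH] p //= [[[_ [qH _]] _ _ _] ql] _; apply: IH ql qH. Qed.

End TimedPaths.

(* Loop erasure: when the new first site reappears further along the path, the loop
   back to it is cut out; the arrivals that remain are then still later than [s]. *)
Lemma reach_self_avoiding (R : realType) (T : Type) (A : site -> site -> T -> set R) w
    x s y (t : R) : reach A w x s y t ->
  exists l, [/\ timed_path A w t (x, s) l, uniq (x :: map fst l) & last x (map fst l) = y].
Proof.
elim=> {x s y t} [x s t|x z y s u t xz Axz su ut _ [l [zl zl_uniq zl_y]]].
  by exists [::].
have [xl|xNl] := boolP (x \in z :: map fst l); last first.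
  by exists ((z, u) :: l); split=> //=; rewrite xNl.
rewrite inE in xl; case/predU1P: xl => [->|xl].
  by exists l; split=> //; apply: timed_path_earlier (ltW su) zl.
pose i := index x (map fst l).
have il : (i < size l)%N by rewrite -(size_map fst) index_mem.
have xi : (nth (z, u) l i).1 = x by rewrite -(nth_map _ z) ?nth_index.
have /timed_path_cat[zl1 zl2] : timed_path A w t (z, u) (take i.+1 l ++ drop i.+1 l).
  by rewrite cat_take_drop.
have last1 : last (z, u) (take i.+1 l) = nth (z, u) l i.
  by rewrite (last_nth (z, u)) size_takel //= nth_take.
rewrite last1 [nth _ _ _]surjective_pairing xi in zl2.
have uv := timed_path_time zl1; rewrite last1 /= in uv.
have xdrop : x :: map fst (drop i.+1 l) = drop i (map fst l).
  by rewrite map_drop [in RHS](drop_nth z) ?size_map ?nth_index.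
exists (drop i.+1 l); split.
- exact: timed_path_earlier (ltW (lt_le_trans su uv)) zl2.
- by rewrite xdrop; apply: drop_uniq; case/andP: zl_uniq.
- rewrite -zl_y -[in RHS](cat_take_drop i.+1 l) map_cat last_cat.
  by rewrite (last_map fst _ (z, u)) last1 xi.
Qed.

Lemma near_segment_in_box (R : realType) (n k : nat) (x y : site) :
  segment0 n x -> inH y -> `|y.1 - x.1| + `|y.2 - x.2| <= k%:Z ->
  (k%:R : R) <= ln n%:R -> box R n y.
Proof.
case=> /andP[x1_ge x1_le] x2_0 y2_ge xy kn.
(* Restated so that lia recognises the comparisons coming from [segment0] and [inH]. *)
have {x1_ge x1_le x2_0 y2_ge} [x1_ge x1_le x2_0 y2_ge] :
  [/\ - n%:Z <= x.1, x.1 <= n%:Z, x.2 = 0 & 0 <= y.2] by [].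
have k_ge : (0 : R) <= k%:R := ler0n R k.
have y1_ge : (- n%:Z - k%:Z)%:~R <= y.1%:~R :> R by rewrite ler_int; lia.
have y1_le : y.1%:~R <= (n%:Z + k%:Z)%:~R :> R by rewrite ler_int; lia.
have y2_le : y.2%:~R <= k%:Z%:~R :> R by rewrite ler_int; lia.
have y2_ge_R : 0 <= y.2%:~R :> R by rewrite ler0z.
rewrite intrB intrN in y1_ge; rewrite intrD in y1_le.
by split; apply/andP; split; lra.
Qed.

Section Slots.
Variables (R : realType) (k : nat).
Local Notation K := k.+1.

Definition slot_lo (j : 'I_K) : R := j%:R / K%:R.
Definition slot_hi (j : 'I_K) : R := j.+1%:R / K%:R.

Definition slot (u : R) : 'I_K := inord (absz (Num.ceil (u * K%:R))).-1.

Lemma slot_val u : 0 < u -> u <= 1 -> (slot u)%:Z = Num.ceil (u * K%:R) - 1.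
Proof.
move=> u_gt0 u_le1.
have ceil_ge1 : 1 <= Num.ceil (u * K%:R).
  have : ~~ (Num.ceil (u * K%:R) <= 0) by rewrite ceil_le0 -ltNge mulr_gt0.
  lia.
have ceil_leK : Num.ceil (u * K%:R) <= K%:Z.
  by rewrite ceil_le_int /= -[leRHS]mul1r ler_wpM2r.
by rewrite inordK; move: (Num.ceil _) ceil_ge1 ceil_leK => c; lia.
Qed.

Lemma slotP u : 0 < u -> u <= 1 -> slot_lo (slot u) < u <= slot_hi (slot u).
Proof.
move=> u_gt0 u_le1.
have e : (slot u)%:R = (Num.ceil (u * K%:R))%:~R - 1 :> R.
  by rewrite -[_%:R]/((slot u)%:Z%:~R) slot_val // intrB.
rewrite /slot_lo /slot_hi ltr_pdivrMr // ler_pdivlMr // -[(slot u).+1]addn1 natrD e subrK.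
by have := ceil_itv (u * K%:R); rewrite intrB.
Qed.

Lemma slot_homo u u' : 0 < u -> u <= u' -> u' <= 1 -> (slot u <= slot u')%N.
Proof.
move=> u_gt0 uu' u'_le1; have u'_gt0 := lt_le_trans u_gt0 uu'.
rewrite -lez_nat (slot_val u_gt0 (le_trans uu' u'_le1)) (slot_val u'_gt0 u'_le1) lerD2r.
by apply: le_ceil; rewrite ler_wpM2r.
Qed.

End Slots.

Definition nondecreasing_ffun (m m' : nat) (j : {ffun 'I_m -> 'I_m'}) : bool :=
  [forall i : 'I_m, forall i' : 'I_m, (i <= i')%N ==> (j i <= j i')%N].

Section NondecreasingCount.
Variables m m' : nat.

Lemma stair_subproof (j : {ffun 'I_m -> 'I_m'}) (i : 'I_m) : (i + j i < m + m')%N.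
Proof. by have := ltn_ord i; have := ltn_ord (j i); lia. Qed.

(* A nondecreasing map is recovered from the strictly increasing sequence i + j i. *)
Definition stairs (j : {ffun 'I_m -> 'I_m'}) : {set 'I_(m + m')} :=
  [set Ordinal (stair_subproof j i) | i : 'I_m].

Lemma stairs_agree_le (j1 j2 : {ffun 'I_m -> 'I_m'}) (i : 'I_m) :
  nondecreasing_ffun j1 -> nondecreasing_ffun j2 -> stairs j1 = stairs j2 ->
  (forall i' : 'I_m, (i' < i)%N -> j1 i' = j2 i') -> (j1 i <= j2 i)%N.
Proof.
move=> /forallP j1_homo /forallP j2_homo j12 below; rewrite leqNgt; apply/negP => lt21.
have /imsetP[i' _ [e]] : Ordinal (stair_subproof j2 i) \in stairs j1.
  by rewrite j12; apply: imset_f.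
case: (ltngtP i' i) => [i'i | ii' | /val_inj i'i].
- have := implyP (forallP (j2_homo i') i) (ltnW i'i); rewrite -below //; lia.
- by have := implyP (forallP (j1_homo i) i') (ltnW ii'); lia.
- by move: e; rewrite i'i; lia.
Qed.

Lemma stairs_inj : {in [pred j | nondecreasing_ffun j] &, injective stairs}.
Proof.
move=> j1 j2 j1_homo j2_homo j12.
suff agree i0 (i : 'I_m) : (i < i0)%N -> j1 i = j2 i by apply/ffunP => i; apply: (agree m).
elim: i0 i => // i0 IH i ii0.
have below (i' : 'I_m) : (i' < i)%N -> j1 i' = j2 i' by move=> i'i; apply: IH; lia.
apply/val_inj/eqP; rewrite eqn_leq !stairs_agree_le // => i' /below //.
Qed.

Lemma card_nondecreasing_ffun :
  (#|[pred j : {ffun 'I_m -> 'I_m'} | nondecreasing_ffun j]| <= 2 ^ (m + m'))%N.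
Proof.
apply: leq_trans (leq_card_in _ _ stairs_inj) _.
by rewrite -cardsT -powersetT card_powerset cardsT card_ord.
Qed.

End NondecreasingCount.

Definition arrivals_event (R : realType) (T : Type) (A : site -> site -> T -> set R)
    (m : nat) (x y : 'I_m -> site) (s t : 'I_m -> R) : set T :=
  [set w | forall i, exists2 u, A (x i) (y i) w u & s i < u <= t i].

Section Skeletons.
Variables (R : realType) (T : Type) (A : site -> site -> T -> set R) (n k : nat).
Local Notation K := k.+1.

(* A skeleton records the starting point on [-n, n] x {0}, the K directions of
   a lattice path, and the time slot of each of its K steps. *)
Definition skeleton := ('I_(2 * n).+1 * {ffun 'I_K -> 'I_4} * {ffun 'I_K -> 'I_K})%type.

Definition skel_site (p : skeleton) (i : nat) : site :=
  walk ((p.1.1 : nat)%:Z - n%:Z, 0) (fun i => p.1.2 (inord i)) i.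

Definition admissible (p : skeleton) : bool :=
  [&& injectiveb (fun i : 'I_K => skel_site p i),
      [forall i : 'I_K.+1, 0 <= (skel_site p i).2] & nondecreasing_ffun p.2].

Definition skel_event (p : skeleton) : set T :=
  arrivals_event A (fun i : 'I_K => skel_site p i) (fun i => skel_site p i.+1)
    (fun i => slot_lo R (p.2 i)) (fun i => slot_hi R (p.2 i)).

Definition escape_cover : set T := \big[setU/set0]_(p | admissible p) skel_event p.

Lemma skel_siteS (p : skeleton) i :
  skel_site p i.+1 = site_add (skel_site p i) (unit_step (p.1.2 (inord i))).
Proof. by []. Qed.

Lemma skel_site_height (p : skeleton) i : (skel_site p i).2 <= i%:Z.
Proof. by rewrite -[i%:Z]add0r; apply: walk_height. Qed.

Lemma long_escape_path w x l : segment0 n x -> timed_path A w 1 (x, 0) l ->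
  (k%:R : R) <= ln n%:R -> ~ box R n (last x (map fst l)) -> (k < size l)%N.
Proof.
move=> xseg xl kn; apply: contra_notT; rewrite -leqNgt => lk.
have x_inH : inH x by case: xseg => _ x2; rewrite /inH x2.
rewrite (last_map fst _ (x, 0)); apply: near_segment_in_box xseg (timed_path_inH xl x_inH) _ kn.
by apply: le_trans (timed_path_dist xl) _; rewrite lez_nat.
Qed.

Definition path_state (x : site) (l : seq (site * R)) (i : nat) : site * R :=
  nth (x, 0) ((x, 0) :: l) i.

Definition path_skeleton (x : site) (l : seq (site * R)) : skeleton :=
  (inord (absz (x.1 + n%:Z)),
   [ffun i : 'I_K => step_index (path_state x l i).1 (path_state x l i.+1).1],
   [ffun i : 'I_K => slot k (path_state x l i.+1).2]).

Section PathSkeleton.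
Variables (w : T) (x : site) (l : seq (site * R)).
Hypotheses (xseg : segment0 n x) (xl : timed_path A w 1 (x, 0) l) (lK : size l = K).
Local Notation q := (path_state x l).

Lemma path_step i : (i < K)%N -> timed_step A w 1 (q i) (q i.+1).
Proof. by rewrite -lK; apply: timed_pathP. Qed.

Lemma path_time_gt0 i : (i < K)%N -> 0 < (q i.+1).2.
Proof.
move=> iK; have [_ _ lt _] := path_step iK; apply: le_lt_trans lt.
by apply: (timed_path_time_homo (i := 0) xl); rewrite lK /= ltnW.
Qed.

Lemma path_skeleton_site i : (i <= K)%N -> skel_site (path_skeleton x l) i = (q i).1.
Proof.
case: xseg => /andP[x1_ge x1_le] x2; move: x1_ge x1_le => /= x1_ge x1_le.
elim: i => [_|i IH iK].
  by rewrite /skel_site /= [RHS]surjective_pairing x2 inordK; [congr pair|]; lia.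
rewrite skel_siteS (IH (ltnW iK)) ffunE -[i]/(val (Ordinal iK)) inord_val /=.
by have [[_ [_ ?]] _ _ _] := path_step iK; apply/esym/nn_step_index.
Qed.

Lemma path_skeleton_admissible : uniq (x :: map fst l) -> admissible (path_skeleton x l).
Proof.
have vertex i : (i <= K)%N -> skel_site (path_skeleton x l) i = nth x (x :: map fst l) i.
  by move=> iK; rewrite path_skeleton_site // -(nth_map (x, 0) x fst) //= lK ltnS.
move=> xl_uniq; apply/and3P; split.
- apply/injectiveP => i i' /=; rewrite !vertex ?(ltnW (ltn_ord _)) // => /eqP.
  rewrite nth_uniq //= ?size_map ?lK ?ltnS ?(ltnW (ltn_ord _)) //.
  by move/eqP/val_inj.
- apply/forallP => -[[|i] iK]; rewrite path_skeleton_site //=; first by case: xseg => _ ->.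
  by have [[_ [? _]] _ _ _] := path_step iK.
- apply/forallP => i; apply/forallP => i'; apply/implyP => ii'; rewrite !ffunE.
  apply: slot_homo (path_time_gt0 (ltn_ord i)) _ _.
    by apply: (timed_path_time_homo xl); rewrite lK ltnS ii' ltn_ord.
  by have [] := path_step (ltn_ord i').
Qed.

Lemma path_skeleton_event : skel_event (path_skeleton x l) w.
Proof.
move=> i; rewrite !path_skeleton_site ?(ltnW (ltn_ord _)) //.
have [_ ? _ ?] := path_step (ltn_ord i); exists (q i.+1).2 => //.
by rewrite ffunE; apply: slotP; first exact: path_time_gt0.
Qed.

End PathSkeleton.

Lemma escape_sub_cover : (K%:R : R) <= ln n%:R ->
  [set w | ~ (I_procV A w (segment0 n) 1 `<=` box R n)] `<=` escape_cover.
Proof.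
move=> Kn w /nonsubset[y [[x xseg xy] ybox]].
have [l [xl xl_uniq xl_y]] := reach_self_avoiding xy.
have Kl : (K <= size l)%N.
  by apply: long_escape_path xseg xl (le_trans _ Kn) _; rewrite ?xl_y ?ler_nat.
have xl' := timed_path_take K xl; have lK := size_takel Kl.
have xl'_uniq : uniq (x :: map fst (take K l)).
  by rewrite map_take; apply: (take_uniq K.+1 xl_uniq).
rewrite /escape_cover (bigD1 _ (path_skeleton_admissible xseg xl' lK xl'_uniq)) /=.
by left; apply: path_skeleton_event.
Qed.

End Skeletons.

Lemma card_admissible n k :
  (#|[pred p : skeleton n k | admissible p]| <= (2 * n).+1 * 4 ^ k.+1 * 4 ^ k.+1)%N.
Proof.
apply: (@leq_trans #|[predX predT & [pred j | nondecreasing_ffun j]]|).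
  by apply: subset_leq_card; apply/fintype.subsetP => -[[a dir] j]; rewrite !inE => /and3P[].
rewrite cardX card_prod card_ffun !card_ord leq_mul //.
by have := card_nondecreasing_ffun k.+1 k.+1; rewrite addnn -mul2n expnM.
Qed.

Lemma measure_bigsetU_le d (T : ringOfSetsType d) (R : realFieldType)
    (mu : {content set T -> \bar R}) (I : Type) (r : seq I) (q : pred I) (F : I -> set T) :
  (forall i, q i -> measurable (F i)) ->
  (mu (\big[setU/set0]_(i <- r | q i) F i) <= \sum_(i <- r | q i) mu (F i))%E.
Proof.
move=> Fm; elim: r => [|i r IH]; first by rewrite !big_nil measure0.
rewrite !big_cons; case: ifP => // qi.
apply: le_trans (measureU2 mu (Fm i qi) (bigsetU_measurable r Fm)) _.
by rewrite leeD2l.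
Qed.

Lemma npts0P (R : realType) (S : set R) a b :
  npts S a b 0 <-> ~ exists2 u, S u & a < u <= b.
Proof.
split=> [[l [_ [/size0nil -> Sl]]] [u Su /andP[au ub]] | noS].
  by have := (Sl u).2 (conj Su (conj au ub)); rewrite in_nil.
exists [::]; split=> //; split=> // u; split=> // -[Su [au ub]].
by case: noS; exists u; rewrite ?au.
Qed.

Section Independence.
Variables (R : realType) (d : measure_display) (T : measurableType d)
  (P : probability T R) (A : site -> site -> T -> set R).
Hypothesis indepA : indep_poisson_family P A.
Variables (m : nat) (x y : 'I_m -> site) (s t : 'I_m -> R).
Hypothesis edge_itv : forall i, edgeH (x i) (y i) /\ 0 <= s i /\ s i <= t i.
Hypothesis x_inj : injective x.

Definition no_arrival (i : 'I_m) : set T := [set w | npts (A (x i) (y i) w) (s i) (t i) 0].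

Definition arrival_pattern (Z G : {set 'I_m}) : set T :=
  [set w | (forall i, i \in Z -> no_arrival i w) /\ (forall i, i \in G -> ~ no_arrival i w)].

Definition void_prob (i : 'I_m) : R := expR (- (rate R (x i) * (t i - s i))).

(* Independence is applied to all m edges, those outside [Z] with the empty
   interval ]0, 0]. *)
Lemma arrival_pattern0_prob Z : measurable (arrival_pattern Z finset.set0) /\
  P (arrival_pattern Z finset.set0) = (\prod_(i in Z) void_prob i)%:E.
Proof.
pose s' i := if i \in Z then s i else 0.
pose t' i := if i \in Z then t i else 0.
have edge_itv' i : edgeH (x i) (y i) /\ 0 <= s' i /\ s' i <= t' i.
  by rewrite /s' /t'; case: ifP => _; [apply: edge_itv | have [] := edge_itv i].
have distinct_edges i j : i != j -> x i = x j -> y i = y j -> t' i <= s' j \/ t' j <= s' i.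
  by move=> /eqP ij /x_inj.
have -> : arrival_pattern Z finset.set0 = [set w | forall i, npts (A (x i) (y i) w) (s' i) (t' i) 0].
  apply/seteqP; split=> w /=; rewrite /s' /t'.
  - move=> [wZ _] i; case: ifP => [/wZ //|_].
    by apply/npts0P => -[u _ /andP[/lt_le_trans/[apply]]]; rewrite ltxx.
  - by move=> wZ; split=> [i iZ | i]; [have := wZ i; rewrite iZ | rewrite inE].
have [Em ->] := indepA (fun=> 0%N) edge_itv' distinct_edges.
split=> //; congr EFin; rewrite [RHS]big_mkcond; apply: eq_bigr => i _.
rewrite /Defs.poisson_pmf expr0 fact0 divr1 mulr1 /s' /t' /void_prob.
by case: ifP => // _; rewrite subrr mulr0 oppr0 expR0.
Qed.

Lemma arrival_patternD (Z G : {set 'I_m}) g : g \in G ->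
  arrival_pattern Z G =
  arrival_pattern Z (G :\ g) `\` arrival_pattern (g |: Z) (G :\ g).
Proof.
move=> gG; apply/seteqP; split=> w /=.
- move=> [wZ wG]; split; first by split=> // i /setD1P[_ /wG].
  by case=> /(_ g (setU11 _ _)) wg _; apply: wG gG wg.
- move=> [[wZ wG] wNg]; split=> // i iG.
  have [-> wg|ig] := eqVneq i g; last by apply: wG; rewrite in_setD1 ig.
  by apply: wNg; split=> // i' /setU1P[-> //|/wZ].
Qed.

Lemma arrival_pattern_prob (Z G : {set 'I_m}) : [disjoint Z & G]%B ->
  measurable (arrival_pattern Z G) /\
  P (arrival_pattern Z G) = (\prod_(i in Z) void_prob i * \prod_(i in G) (1 - void_prob i))%:E.
Proof.
move cG: #|G| => N; elim: N Z G cG => [|N IH] Z G cG ZG.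
  by rewrite (cards0_eq cG) big_set0 mulr1; apply: arrival_pattern0_prob.
have [g gG] : exists g, g \in G by apply/set0Pn; rewrite -card_gt0 cG.
have cG' : #|G :\ g| = N by move: cG; rewrite (cardsD1 g) gG => -[].
have ZG' : [disjoint Z & G :\ g]%B by apply: disjointWr ZG; apply: subD1set.
have gZ : g \notin Z by apply: contraTN ZG => gZ; apply/pred0Pn; exists g; apply/andP.
have gZG' : [disjoint g |: Z & G :\ g]%B.
  apply/pred0P => i /=; have /pred0P/(_ i) := ZG; rewrite !inE /=.
  by case: (i == g); case: (i \in Z); case: (i \in G).
have [E1m E1] := IH _ _ cG' ZG'.
have [E2m E2] := IH _ _ cG' gZG'.
have E21 : arrival_pattern (g |: Z) (G :\ g) `<=` arrival_pattern Z (G :\ g).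
  by move=> w [wZ wG]; split=> // i iZ; apply: wZ; rewrite setU1r.
rewrite (arrival_patternD Z gG); split; first exact: measurableD.
rewrite measureD // ?(setIidr E21); last first.
  by apply: le_lt_trans (probability_le1 P E1m) _; rewrite ltey.
apply: eq_trans (f_equal2 (fun a b => (a - b)%E) E1 E2) _; rewrite -EFinB.
rewrite big_setU1 //= -[in RHS](finset.setD1K gG) big_setU1 ?setD11 //=; congr EFin; ring.
Qed.

Lemma arrivals_event_prob_le : measurable (arrivals_event A x y s t) /\
  (P (arrivals_event A x y s t) <= (\prod_i (rate R (x i) * (t i - s i)))%:E)%E.
Proof.
have -> : arrivals_event A x y s t = arrival_pattern finset.set0 [set: 'I_m]%SET.
  apply/seteqP; split=> w /=.
  - by move=> wx; split=> [i|i _ /npts0P]; rewrite ?inE.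
  - by move=> [_ wx] i; apply: contrapT => /npts0P; apply: wx; rewrite inE.
have disj0T : [disjoint finset.set0 & [set: 'I_m]%SET]%B by apply/pred0P => i; rewrite !inE.
have [Em ->] := arrival_pattern_prob disj0T.
split=> //; rewrite big_set0 mul1r lee_fin; under eq_bigl do rewrite inE.
apply: ler_prod => i _; have [_ [s_ge0 st]] := edge_itv i.
have mu_ge0 : 0 <= rate R (x i) * (t i - s i).
  by rewrite mulr_ge0 ?subr_ge0 // le_max ler01 orbT.
rewrite /void_prob subr_ge0 expR_le1 oppr_le0 mu_ge0 /=.
by have := expR_ge1Dx (- (rate R (x i) * (t i - s i))); lra.
Qed.

End Independence.

Lemma rate_le_sqrt (R : realType) (z : site) (h : nat) :
  (0 < h)%N -> 0 <= z.2 <= h%:Z -> rate R z <= Num.sqrt h%:R.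
Proof.
move=> h_gt0 /andP[_ z_le]; rewrite /rate ge_max; apply/andP; split.
  by apply: ler_wsqrtr; rewrite -[h%:R]/(h%:Z%:~R) ler_int.
by rewrite -{1}sqrtr1; apply: ler_wsqrtr; rewrite ler1n.
Qed.

Section EscapeProbability.
Variables (R : realType) (d : measure_display) (T : measurableType d)
  (P : probability T R) (A : site -> site -> T -> set R).
Hypothesis indepA : indep_poisson_family P A.
Variables n k : nat.
Local Notation K := k.+1.

Lemma skel_event_prob_le (p : skeleton n k) : admissible p ->
  measurable (skel_event A p) /\
  (P (skel_event A p) <= ((Num.sqrt K%:R / K%:R) ^+ K)%:E)%E.
Proof.
case/and3P => /injectiveP site_inj /forallP site_inH _.
have slot_len (j : 'I_K) : slot_hi R j - slot_lo R j = K%:R^-1.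
  by rewrite /slot_hi /slot_lo -mulrBl -natrB // subSnn mul1r.
have edge_itv (i : 'I_K) : edgeH (skel_site p i) (skel_site p i.+1) /\
    0 <= slot_lo R (p.2 i) /\ slot_lo R (p.2 i) <= slot_hi R (p.2 i).
  split; [split; [|split] | split].
  - exact: (site_inH (widen_ord (leqnSn _) i)).
  - exact: (site_inH (lift ord0 i)).
  - exact: nn_unit_step.
  - by rewrite divr_ge0.
  - by rewrite -subr_ge0 slot_len invr_ge0.
have [Em Ele] := arrivals_event_prob_le indepA edge_itv site_inj.
split=> //; apply: le_trans Ele _; rewrite lee_fin -[X in _ ^+ X](card_ord K) -prodr_const.
apply: ler_prod => i _; rewrite slot_len mulr_ge0 ?invr_ge0 ?le_max ?ler01 ?orbT //=.
rewrite ler_pM2r ?invr_gt0 // rate_le_sqrt // (site_inH (widen_ord (leqnSn _) i)) /=.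
by apply: le_trans (skel_site_height p i) _; rewrite lez_nat; exact/ltnW/ltn_ord.
Qed.

Lemma escape_cover_prob_le : measurable (escape_cover A n k) /\
  (P (escape_cover A n k) <= (((2 * n).+1)%:R * (16 * (Num.sqrt K%:R / K%:R)) ^+ K)%:E)%E.
Proof.
have skel_m (p : skeleton n k) : admissible p -> measurable (skel_event A p).
  by case/skel_event_prob_le.
split; first exact: bigsetU_measurable.
apply: le_trans (measure_bigsetU_le P _ skel_m) _.
apply: (@le_trans _ _ (\sum_(p | admissible p) ((Num.sqrt K%:R / K%:R) ^+ K)%:E)%E).
  by apply: lee_sum => p ap; case: (skel_event_prob_le ap).
rewrite sumEFin lee_fin sumr_const -[_ *+ #|_|]mulr_natl.
apply: le_trans (_ : _ <= ((2 * n).+1 * 4 ^ K * 4 ^ K)%:R * (Num.sqrt K%:R / K%:R) ^+ K) _.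
  by rewrite ler_wpM2r ?exprn_ge0 ?divr_ge0 ?sqrtr_ge0 // ler_nat card_admissible.
have -> : (16 : R) = 4%:R * 4%:R by rewrite -natrM.
by rewrite !natrM !natrX !exprMn !mulrA.
Qed.

End EscapeProbability.

(* (2x + 1) x^C q^K <= 3 x^(c+1) q^K <= 3 e^((K+1)(c+1) - (c+2)K) <= 3 e^-3 < 1 *)
Lemma linear_geometric_lt_inv_powR (R : realType) (C : R) (c K : nat) (x q : R) :
  C <= c%:R -> 1 <= x -> 0 <= q <= expR (- (c%:R + 2)) ->
  ln x < K%:R + 1 -> c%:R + 4 <= K%:R :> R ->
  (2 * x + 1) * q ^+ K < 1 / x `^ C.
Proof.
move=> Cc x_ge1 /andP[q_ge0 q_le] lnxK cK.
have x_gt0 : 0 < x := lt_le_trans ltr01 x_ge1.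
have xC_gt0 : 0 < x `^ C by apply: powR_gt0.
have xC_le : x `^ C <= x ^+ c.
  by rewrite -powR_mulrn ?(ltW x_gt0) //; exact: (ler_powR x_ge1 Cc).
have xc_le : x ^+ c.+1 <= expR ((K%:R + 1) * c.+1%:R).
  rewrite -[x in x ^+ _]lnK ?posrE // -expRM_natr ler_expR ler_wpM2r //.
  exact: ltW.
have qK_le : q ^+ K <= expR (- (c%:R + 2) * K%:R).
  by rewrite expRM_natr; apply: lerXn2r; rewrite ?nnegrE ?expR_ge0.
have exp_le : expR ((K%:R + 1) * c.+1%:R) * expR (- (c%:R + 2) * K%:R) <= expR (-3) :> R.
  by rewrite -expRD ler_expR -natr1; nra.
have three_exp : 3 * expR (-3) < 1 :> R.
  rewrite expRN ltr_pdivrMr ?expR_gt0 // mul1r.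
  by have := expR_ge1Dx (3 : R); lra.
have front : (2 * x + 1) * x `^ C <= 3 * x ^+ c.+1.
  by rewrite exprS mulrA; apply: ler_pM; rewrite ?powR_ge0 //; lra.
rewrite ltr_pdivlMr // mulrAC; apply: le_lt_trans three_exp.
apply: le_trans (_ : _ <= 3 * x ^+ c.+1 * q ^+ K) _.
  by apply: ler_wpM2r front; rewrite exprn_ge0.
rewrite -mulrA ler_wpM2l //; apply: le_trans exp_le.
by apply: ler_pM; rewrite ?exprn_ge0 ?(ltW x_gt0).
Qed.

Lemma sqrtr_div_le_inv (R : realType) (b K : R) : 0 < b -> b ^+ 2 <= K -> Num.sqrt K / K <= b^-1.
Proof.
move=> b_gt0 bK; have K_gt0 : 0 < K := lt_le_trans (exprn_gt0 2 b_gt0) bK.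
have sK_gt0 : 0 < Num.sqrt K by rewrite sqrtr_gt0.
rewrite -{2}(sqr_sqrtr (ltW K_gt0)) expr2 invfM mulrA divff ?gt_eqF // mul1r.
by rewrite lef_pV2 ?posrE // -(ger0_norm (ltW b_gt0)) -sqrtr_sqr ler_wsqrtr.
Qed.

Lemma large_log_floor (R : realType) (L : R) : exists N : nat, forall n, (N <= n)%N ->
  1 <= n%:R :> R /\
  exists k : nat, [/\ L < k.+1%:R, k.+1%:R <= ln (n%:R : R) & ln (n%:R : R) < k.+2%:R].
Proof.
pose L' := Num.max L 0.
exists (Num.truncn (expR (L' + 1))).+1 => n Nn.
have L'_ge : L <= L' /\ 0 <= L' by rewrite /L' !le_max !lexx orbT.
have n_gt : expR (L' + 1) < n%:R.
  by apply: lt_le_trans (truncnS_gt _) _; rewrite ler_nat.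
have n_ge1 : 1 <= n%:R :> R.
  by apply: le_trans (ltW n_gt); apply: le_trans (expR_ge1Dx _); lra.
have ln_gt : L' + 1 < ln (n%:R : R).
  by rewrite -ltr_expR lnK // posrE (lt_le_trans ltr01).
have ln_ge1 : 1 <= ln (n%:R : R) by lra.
have K_gt0 : (0 < Num.truncn (ln (n%:R : R)))%N by rewrite truncn_gt0.
split=> //; exists (Num.truncn (ln (n%:R : R))).-1; rewrite prednK //.
have /andP[lo hi] := truncn_itv (le_trans ler01 ln_ge1).
by split=> //; move: hi; rewrite -natr1; lra.
Qed.

Lemma escape_bound_lt (R : realType) (C : R) : exists N : nat, forall n, (N <= n)%N ->
  exists k : nat, k.+1%:R <= ln (n%:R : R) /\
    ((2 * n).+1%:R * (16 * (Num.sqrt k.+1%:R / k.+1%:R)) ^+ k.+1 < 1 / n%:R `^ C).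
Proof.
pose c := (Num.truncn C).+1.
have Cc : C <= c%:R by apply/ltW/truncnS_gt.
have e_gt0 : 0 < 16 * expR (c%:R + 2) :> R by rewrite mulr_gt0 ?expR_gt0.
have [N large] := large_log_floor (Num.max ((16 * expR (c%:R + 2)) ^+ 2) (c%:R + 4) : R).
exists N => n /large[n_ge1 [k [Lk kn nk]]]; exists k; split=> //.
move: Lk; rewrite gt_max => /andP[/ltW Kb /ltW cK].
rewrite -[(2 * n).+1]addn1 natrD natrM; apply: (linear_geometric_lt_inv_powR Cc n_ge1 _ _ cK).
  rewrite mulr_ge0 ?divr_ge0 ?sqrtr_ge0 //=.
  apply: le_trans (ler_wpM2l _ (sqrtr_div_le_inv e_gt0 Kb)) _ => //.
  by rewrite invfM mulrA divff // mul1r expRN.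
by rewrite natr1.
Qed.

Theorem mainTheorem4 (R : realType) (d : measure_display) (T : measurableType d)
    (P : probability T R) (A : site -> site -> T -> set R) :
  indep_poisson_family P A ->
  forall C : R, exists N : nat, forall n : nat, (N <= n)%N ->
    exists B : set T, measurable B /\
      [set w | ~ (I_procV A w (segment0 n) 1 `<=` box R n)] `<=` B /\
      (P B < (1 / (n%:R `^ C))%:E)%E.
Proof.
move=> indepA C; have [N bound] := escape_bound_lt C.
exists N => n /bound[k [kn escape_lt]].
have [cover_m cover_le] := escape_cover_prob_le indepA n k.
exists (escape_cover A n k); split=> //; split; first exact: escape_sub_cover.
by apply: le_lt_trans cover_le _; rewrite lte_fin.
Qed.
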